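(* Let $k$ be a positive integer, $a=6k+1$, $b=a+2$, $c=a+4$, $S=\{a,b,c\}$, $G=\langle S\rangle$, $t=\lfloor 3k/2\rfloor$, and $\epsilon=0$ if $k$ is even, $\epsilon=1$ if $k$ is odd. Define $A_{i,k}=[ia,\,ia+4i]_2$ for $i\in[1,t]$, and for $i\in[t+1,2t+\epsilon]$ $B_{i,k}=[ia,\,ia+2(2(i-t-1)-\epsilon)]$, $C_{i,k}=[ia+2(2(i-t-1)-\epsilon+1),\,ia+2(2t+\epsilon)]_2$. Let $H_{4,k}=\{0\}\cup\bigcup_{i=1}^{t}A_{i,k}\cup\bigcup_{i=t+1}^{2t+\epsilon}(B_{i,k}\cup C_{i,k})\cup[(2t+\epsilon+1)a,\infty[$. Then: (1) $H_{4,k}$ is a submonoid of $(\mathbb{N},+,0)$ containing $S$; (2) $A_{i,k}<A_{i+1,k}$ for $i\in[1,t-1]$; if $k$ is even then $A_{t,k}<B_{t+1,k}$ and $B_{t+1,k}<C_{t+1,k}$, while if $k$ is odd then $B_{t+1,k}=\emptyset$ and $A_{t,k}<C_{t+1,k}$; $B_{i,k}<C_{i,k}$ for $i\in[t+2,2t+\epsilon]$; $C_{i,k}<B_{i+1,k}$ for $i\in[t+1,2t+\epsilon-1]$; and $C_{2t+\epsilon,k}<[(2t+\epsilon+1)a,\infty[$; (3) $G=H_{4,k}$; (4) $H_{4,k}$ is a $3$-permutation numerical semigroup.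
   Context: $\mathbb{N}=\{0,1,2,\dots\}$. A numerical semigroup is a submonoid $G$ of $(\mathbb{N},+,0)$ with $\mathbb{N}\setminus G$ finite; $\langle S\rangle$ is the submonoid generated by $S$. Writing the elements of a numerical semigroup as $0=g_0<g_1<g_2<\cdots$, it is an $n$-permutation numerical semigroup if it is generated by $\{g_1,\dots,g_n\}$ and for every $k\in\mathbb{N}$ the tuple $(g_{kn+1}\bmod n,\dots,g_{kn+n}\bmod n)$ contains exactly one representative of each residue class mod $n$. Notation: $[u,v]=\{x\in\mathbb{N}:u\le x\le v\}$ and $[u,v]_2=\{x\in[u,v]:x\equiv u\pmod 2\}$ (both empty if $u>v$); $[u,\infty[=\{x\in\mathbb{N}:x\ge u\}$. For nonempty $X,Y\subseteq\mathbb{N}$, $X<Y$ means $x<y$ for all $x\in X,y\in Y$. *)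

From mathcomp Require Import all_boot all_order all_algebra.
Set Implicit Arguments. Unset Strict Implicit. Unset Printing Implicit Defensive.
Import Order.TTheory GRing.Theory Num.Theory.

Definition natset := nat -> Prop.

(* [u,v] = {x in N : u <= x <= v}; bounds are integers (they may be negative,
   in which case the lower bound is vacuous / the set may be empty). *)
Definition iv (u v : int) : natset := fun x => (u <= x%:Z <= v)%R.
Definition iv2 (u v : int) : natset :=
  fun x => (u <= x%:Z <= v)%R /\ (x%:Z - u)%R \in dvdz 2.
Definition from (u : nat) : natset := fun x => u <= x.

Definition set_lt (X Y : natset) : Prop :=
  (exists x, X x) /\ (exists y, Y y) /\ (forall x y, X x -> Y y -> x < y).

Definition is_submonoid (X : natset) : Prop :=
  X 0 /\ (forall x y, X x -> X y -> X (x + y)).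

Inductive gen (S : natset) : natset :=
  | gen0 : gen S 0
  | genS s x : S s -> gen S x -> gen S (s + x).

Definition numerical_semigroup (X : natset) : Prop :=
  is_submonoid X /\ exists N, forall x, N <= x -> X x.

Definition is_enum (X : natset) (g : nat -> nat) : Prop :=
  (forall j, g j < g j.+1) /\ (forall x, X x <-> exists j, g j = x).

Definition perm_ns (n : nat) (X : natset) : Prop :=
  numerical_semigroup X /\
  exists g, is_enum X g /\
    (forall x, X x <-> gen (fun s => exists2 j, 1 <= j <= n & s = g j) x) /\
    (forall m r, r < n ->
       count (fun j => g (m * n + j) %% n == r) (iota 1 n) = 1).

Definition a4 (k : nat) : nat := 6 * k + 1.
Definition S4 (k : nat) : natset :=
  fun s => s = a4 k \/ s = a4 k + 2 \/ s = a4 k + 4.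
Definition t4 (k : nat) : nat := (3 * k) %/ 2.
Definition eps4 (k : nat) : nat := odd k.

Definition A4 (k i : nat) : natset :=
  iv2 (i * a4 k)%:Z (i * a4 k + 4 * i)%:Z.
Definition B4 (k i : nat) : natset :=
  iv (i * a4 k)%:Z
     ((i * a4 k)%:Z + 2 * (2 * (i%:Z - (t4 k)%:Z - 1) - (eps4 k)%:Z))%R.
Definition C4 (k i : nat) : natset :=
  iv2 ((i * a4 k)%:Z + 2 * (2 * (i%:Z - (t4 k)%:Z - 1) - (eps4 k)%:Z + 1))%R
      ((i * a4 k)%:Z + 2 * (2 * t4 k + eps4 k)%:Z)%R.

Definition H4 (k : nat) : natset := fun x =>
  x = 0
  \/ (exists i, 1 <= i <= t4 k /\ A4 k i x)
  \/ (exists i, t4 k + 1 <= i <= 2 * t4 k + eps4 k /\ (B4 k i x \/ C4 k i x))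
  \/ from ((2 * t4 k + eps4 k + 1) * a4 k) x.

From mathcomp Require Import all_boot all_order all_algebra zify.

(* Write a = 6k+1 = 4t+2e+1 and cut N into the rows [i a, (i+1) a).  Since
   G = <a, a+2, a+4> is the set of all i a + 2j with j <= 2i, an offset y < a
   lies in row i of G iff either y is even and y <= 4i, or y is odd and
   a + y <= 4(i-1).  For i <= t this gives the blocks A_i; for t < i <= 2t+e it
   gives an interval B_i of all small offsets followed by the even offsets C_i;
   from row 2t+e+1 on every integer lies in G.  This proves (1)-(3).

   For (4) we enumerate G with its successor function and compute the rank of
   every element (the number of elements of G below it) in closed form.
   Consecutive elements differ by 1 or 2, except after the last element of a
   block A_i.  Using a = 1 (mod 3) and the values of squares mod 3, the two gaps
   inside each triple g_{3m+1}, g_{3m+2}, g_{3m+3} are congruent and nonzero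
   mod 3, so the triple meets every residue class exactly once. *)

Set Implicit Arguments.
Unset Strict Implicit.

Lemma gen_add (S : natset) x y : gen S x -> gen S y -> gen S (x + y).
Proof. by elim=> [|s x' hs _ IH] hy //; rewrite -addnA; exact: genS hs (IH hy). Qed.

Lemma gen_mono (S T : natset) x : (forall s, S s -> T s) -> gen S x -> gen T x.
Proof. by move=> hST; elim=> [|s x' hs _ IH]; [exact: gen0 | exact: genS (hST s hs) IH]. Qed.

Lemma gen_base (S : natset) s : S s -> gen S s.
Proof. by move=> hs; rewrite -[s]addn0; exact: genS hs (gen0 _). Qed.

Lemma gen_arith3 a x : gen (fun s => s = a \/ s = a + 2 \/ s = a + 4) x <->
  exists i j, j <= 2 * i /\ x = i * a + 2 * j.
Proof.
split.
  elim=> [|s x' hs _ [i [j [hj ->]]]]; first by exists 0, 0.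
  by case: hs => [->|[->|->]]; [exists i.+1, j | exists i.+1, j.+1 | exists i.+1, j.+2]; lia.
case=> i [j [hj ->]]; elim: i j hj => [|i IH] j hj.
  by rewrite (_ : 0 * a + 2 * j = 0); [exact: gen0 | lia].
rewrite (_ : i.+1 * a + 2 * j = (a + 2 * minn j 2) + (i * a + 2 * (j - minn j 2))); last lia.
by apply: genS; [lia | apply: IH; lia].
Qed.

Section OddRows.
Variable a : nat.
Hypothesis a_odd : odd a.

Definition row_mem (i y : nat) : Prop :=
  ~~ odd y /\ y <= 4 * i \/ odd y /\ a + y + 4 <= 4 * i.
Definition memG (x : nat) : Prop := row_mem (x %/ a) (x %% a).

Lemma row_ind (P : nat -> Prop) :
  (forall i y, y < a -> P (i * a + y)) -> forall x, P x.
Proof. by move=> hP x; rewrite (divn_eq x a); apply: hP; rewrite ltn_pmod //; lia. Qed.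

Lemma row_divmod i y : y < a -> (i * a + y) %/ a = i /\ (i * a + y) %% a = y.
Proof. by move=> hy; rewrite divnMDl ?modnMDl ?divn_small ?modn_small ?addn0 //; lia. Qed.

Lemma memG_row i y : y < a -> memG (i * a + y) = row_mem i y.
Proof. by move=> /(row_divmod i) []; rewrite /memG => -> ->. Qed.

Lemma memG0 : memG 0.
Proof. by rewrite -[0](addn0 (0 * a)) memG_row /row_mem; lia. Qed.

Lemma gen_memG x : gen (fun s => s = a \/ s = a + 2 \/ s = a + 4) x <-> memG x.
Proof.
rewrite gen_arith3; split=> [[i [j [hj ->]]] |].
  have [c [r [hr jE]]] : exists c r, r < a /\ 2 * j = c * a + r.
    by exists (2 * j %/ a), (2 * j %% a); rewrite -divn_eq ltn_pmod //; lia.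
  by rewrite jE addnA -mulnDl memG_row // /row_mem; case: c jE => [|[|c]]; lia.
elim/row_ind: x => i y hy; rewrite memG_row // /row_mem => -[] [py hiy].
  by exists i, y./2; lia.
by case: i hiy => [|i] hiy; [lia | exists i, (a + y)./2; lia].
Qed.

Definition nextG (x : nat) : nat :=
  let i := x %/ a in let y := x %% a in
  if a + y + 4 <= 4 * i then x + 1
  else if (y + 2 <= 4 * i) && (y + 2 < a) then x + 2
  else (i + 1) * a.

Lemma nextG_row i y : y < a -> nextG (i * a + y) =
  if a + y + 4 <= 4 * i then i * a + y + 1
  else if (y + 2 <= 4 * i) && (y + 2 < a) then i * a + y + 2
  else (i + 1) * a.
Proof. by move=> /(row_divmod i) []; rewrite /nextG => -> ->. Qed.

Lemma nextG_spec x : memG x ->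
  [/\ memG (nextG x), x < nextG x & forall w, x < w < nextG x -> ~ memG w].
Proof.
elim/row_ind: x => i y hy; rewrite memG_row // nextG_row // /row_mem => hx.
case: ifP => h1; [|case: ifP => /andP h2].
- split=> [|| w]; try lia.
  case: (ltnP (y + 1) a) => hy1.
  + by rewrite -addnA memG_row // /row_mem; lia.
  + by rewrite (_ : _ + 1 = (i + 1) * a + 0) ?memG_row /row_mem; lia.
- split=> [|| w hw]; first (by rewrite -addnA memG_row /row_mem; lia); first lia.
  by rewrite (_ : w = i * a + (y + 1)) ?memG_row /row_mem; lia.
- split=> [|| w hw]; first (by rewrite -[(i + 1) * a]addn0 memG_row /row_mem; lia); first lia.
  by rewrite (_ : w = i * a + (w - i * a)) ?memG_row /row_mem; lia.
Qed.

Definition enumG (n : nat) : nat := iter n nextG 0.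

Lemma enumGS n : enumG n.+1 = nextG (enumG n).
Proof. by []. Qed.

Lemma enumG_mem n : memG (enumG n).
Proof. by elim: n => [|n IH]; [exact: memG0 | case: (nextG_spec IH)]. Qed.

Lemma enumG_lt n : enumG n < enumG n.+1.
Proof. by case: (nextG_spec (enumG_mem n)). Qed.

Lemma enumG_onto x : memG x -> exists n, enumG n = x.
Proof.
move=> hx; have [n /andP[lo hi]] : exists n, enumG n <= x < enumG n.+1.
  elim: x {hx} => [|x [n /andP[lo hi]]]; first by exists 0; exact: enumG_lt 0.
  case: (ltnP x.+1 (enumG n.+1)) => h; first by exists n; rewrite h andbT ltnW.
  by exists n.+1; rewrite h /=; apply: leq_ltn_trans (enumG_lt n.+1); rewrite -ltnS.
exists n; case: (nextG_spec (enumG_mem n)) => _ _ between.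
suff : ~ enumG n < x by lia.
by move=> lt; apply: (between x) => //; rewrite lt.
Qed.

End OddRows.

Lemma sqr_mod3 i : i * i %% 3 = (i %% 3 != 0).
Proof.
by rewrite -modnMml -modnMmr; case: (i %% 3) (ltn_pmod i (isT : 0 < 3)) => [|[|[|]]].
Qed.

Lemma count_mod3_uniq x y z r : uniq [seq w %% 3 | w <- [:: x; y; z]] -> r < 3 ->
  count (fun w => w %% 3 == r) [:: x; y; z] = 1.
Proof. by rewrite /= !inE; lia. Qed.

Lemma odd_4t2e1 t e : odd (4 * t + 2 * e + 1).
Proof. lia. Qed.

Section Ranks.
Variables t e : nat.
Hypothesis e_le1 : e <= 1.
Local Notation a := (4 * t + 2 * e + 1).
Local Notation a_odd := (odd_4t2e1 t e).

(* Row i <= t consists of the 2i+1 even offsets up to 4i, so its offset y has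
   rank i^2 + y/2.  The same formula holds for the even offsets of a row
   t < i <= 2t+e above 4i - a - 3; they are preceded in that row by all offsets
   y <= 4i - a - 3.  Row 2t+e+1 starts at rank (2t+e+1)(2t+e) + 1 and all later
   rows are full. *)
Definition rankG (x : nat) : nat :=
  let i := x %/ a in let y := x %% a in
  if 2 * t + e < i then x + (2 * t + e + 1) * (2 * t + e) + 1 - (2 * t + e + 1) * a
  else if a + y + 3 <= 4 * i then i * i + y + 2 * t + e + 2 - 2 * i
  else i * i + y./2.

Lemma rankG_row i y : y < a -> rankG (i * a + y) =
  if 2 * t + e < i then i * a + y + (2 * t + e + 1) * (2 * t + e) + 1 - (2 * t + e + 1) * a
  else if a + y + 3 <= 4 * i then i * i + y + 2 * t + e + 2 - 2 * i
  else i * i + y./2.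
Proof. by move=> /(row_divmod a_odd i) []; rewrite /rankG => -> ->. Qed.

Lemma rankG_next x : memG a x -> rankG (nextG a x) = (rankG x).+1.
Proof.
elim/(row_ind a_odd): x => i y hy.
rewrite (memG_row a_odd) // (nextG_row a_odd) // /row_mem => hx.
have sq : i <= i * i by case: i {hx} => // i; rewrite mulSn leq_addr.
have tail_row : 2 * t + e < i -> (2 * t + e + 1) * a <= i * a.
  by move=> h; apply: leq_mul; lia.
have last_row : i = 2 * t + e ->
    i * i = (2 * t + e) * (2 * t + e) /\ i * a = (2 * t + e) * a by move->.
case: ifP => h1; [|case: ifP => /andP h2].
- case: (ltnP (y + 1) a) => hy1.
  + rewrite -(addnA (i * a)) !rankG_row //; repeat case: ifP; lia.
  + rewrite (_ : i * a + y + 1 = (i + 1) * a + 0); last lia.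
    rewrite !rankG_row //; repeat case: ifP; lia.
- rewrite -(addnA (i * a)) !rankG_row //; last lia. repeat case: ifP; lia.
- rewrite -[(i + 1) * a]addn0 !rankG_row //; last lia. repeat case: ifP; lia.
Qed.

Lemma rankG_enumG n : rankG (enumG a n) = n.
Proof.
elim: n => [|n IH].
  by rewrite /= -[0](addn0 (0 * a)) rankG_row; repeat case: ifP; lia.
by rewrite enumGS rankG_next ?IH //; exact: (enumG_mem a_odd).
Qed.

(* The two gaps after x are (1,1) or (2,2) except when x is the last element
   of A_i (rank i^2 + 2i) or the second-to-last element of B_i (rank
   i^2 + 2i - 2t - e - 3) or of C_i (rank i^2 + 2t + e - 1), and a = 1 (mod 3)
   means 2t + e = 0 (mod 3), so none of these ranks is 1 mod 3.  Before the
   end of A_i the gaps are 2 and a - 4i, congruent iff i = 2 (mod 3), i.e. iff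
   the rank i^2 + 2i - 1 is 1 mod 3. *)
Lemma nextG_residues x : a %% 3 = 1 -> memG a x -> rankG x %% 3 = 1 ->
  uniq [seq z %% 3 | z <- [:: x; nextG a x; nextG a (nextG a x)]].
Proof.
move=> a3; elim/(row_ind a_odd): x => i y hy.
rewrite (memG_row a_odd) // rankG_row // /row_mem => hx hr.
have := sqr_mod3 i; rewrite /= !inE [nextG _ (_ + y)](nextG_row a_odd) // => sq.
case: ifP => h1; [|case: ifP => /andP h2].
- case: (ltnP (y + 1) a) => hy1.
  + rewrite -(addnA (i * a)) (nextG_row a_odd) //; move: hr; repeat case: ifP; lia.
  + rewrite (_ : i * a + y + 1 = (i + 1) * a + 0); last lia.
    by rewrite (nextG_row a_odd) //; move: hr; repeat case: ifP; lia.
- rewrite -(addnA (i * a)) (nextG_row a_odd) //; last lia. move: hr; repeat case: ifP; lia.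
- rewrite -[(i + 1) * a]addn0 (nextG_row a_odd) //; last lia. move: hr; repeat case: ifP; lia.
Qed.

Lemma memG_conductor x : (2 * t + e + 1) * a <= x -> memG a x.
Proof.
elim/(row_ind a_odd): x => i y hy le_x; rewrite (memG_row a_odd) // /row_mem.
suff : 2 * t + e < i by lia.
by rewrite -ltnS -(@ltn_pmul2r a) ?(leq_ltn_trans le_x) //; lia.
Qed.

Lemma enumG_first : 0 < t -> [/\ enumG a 1 = a, enumG a 2 = a + 2 & enumG a 3 = a + 4].
Proof.
move=> t_gt0; have e1 : enumG a 1 = a.
  by rewrite /= -[0](addn0 (0 * a)) (nextG_row a_odd) //; repeat case: ifP; lia.
have e2 : enumG a 2 = a + 2.
  rewrite enumGS e1 -[a in nextG _ a]mul1n -[1 * a]addn0 (nextG_row a_odd); last lia.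
  by repeat case: ifP; lia.
split=> //; rewrite enumGS e2 -[a in nextG _ (a + _)]mul1n (nextG_row a_odd) //; last lia.
by repeat case: ifP; lia.
Qed.

Lemma enumG_residues m : a %% 3 = 1 ->
  uniq [seq z %% 3 | z <- [:: enumG a (m * 3 + 1); enumG a (m * 3 + 2);
                              enumG a (m * 3 + 3)]].
Proof.
move=> a3; have rk : rankG (enumG a (m * 3 + 1)) %% 3 = 1 by rewrite rankG_enumG; lia.
rewrite (_ : m * 3 + 3 = (m * 3 + 1).+2); last lia.
rewrite (_ : m * 3 + 2 = (m * 3 + 1).+1); last lia.
rewrite !enumGS.
exact (nextG_residues a3 (enumG_mem a_odd _) rk).
Qed.

Lemma memG_perm3 : 0 < t -> a %% 3 = 1 -> perm_ns 3 (memG a).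
Proof.
move=> t_gt0 a3; have [g1 g2 g3] := enumG_first t_gt0.
split.
  split; last by exists ((2 * t + e + 1) * a); exact: memG_conductor.
  split=> [|x y]; first exact: (memG0 a_odd).
  by rewrite -!(gen_memG a_odd); exact: gen_add.
exists (enumG a); split; [split|split].
- exact: (enumG_lt a_odd).
- by move=> x; split=> [/(enumG_onto a_odd) | [n <-]] //; exact: (enumG_mem a_odd).
- move=> x; rewrite -(gen_memG a_odd); split; apply: gen_mono => s.
    by case=> [->|[->|->]]; [exists 1 | exists 2 | exists 3].
  by case=> [[|[|[|[|j]]]]] // _ ->; rewrite ?g1 ?g2 ?g3; [left | right; left | right; right].
- by move=> m r hr; apply: (count_mod3_uniq _ hr); exact: enumG_residues.
Qed.

End Ranks.

Lemma perm_ns_ext n (X Y : natset) :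
  (forall x, X x <-> Y x) -> perm_ns n X -> perm_ns n Y.
Proof.
move=> XY [[[X0 XD] [N XN]] [g [[g_lt g_enum] [g_gen g_perm]]]].
split; first split.
- by split=> [|x y /XY hx /XY hy]; apply/XY; [| exact: XD].
- by exists N => x /XN /XY.
- exists g; split; first by split=> // x; rewrite -XY.
  by split=> // x; rewrite -XY.
Qed.

Lemma a4E k : a4 k = 4 * t4 k + 2 * eps4 k + 1.
Proof. rewrite /a4 /t4 /eps4; lia. Qed.

Lemma eps4_le1 k : eps4 k <= 1.
Proof. by rewrite /eps4; case: odd. Qed.

Lemma a4_mod3 k : a4 k %% 3 = 1.
Proof. rewrite /a4; lia. Qed.

Lemma t4_gt0 k : 0 < k -> 0 < t4 k.
Proof. rewrite /t4; lia. Qed.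

Lemma A4_lt_A4 k i : 1 <= i <= t4 k - 1 -> set_lt (A4 k i) (A4 k i.+1).
Proof.
move=> hi; have := a4E k; have := eps4_le1 k; rewrite /set_lt /A4 /iv2 => e1 aE.
split; first by exists (i * a4 k); lia.
split; first by exists (i.+1 * a4 k); lia.
move=> x y; lia.
Qed.

Lemma A4_lt_B4 k : ~~ odd k -> set_lt (A4 k (t4 k)) (B4 k (t4 k + 1)).
Proof.
move=> ev; have := a4E k; rewrite /set_lt /A4 /B4 /iv /iv2 /eps4 (negbTE ev) => aE.
split; first by exists (t4 k * a4 k); lia.
split; first by exists ((t4 k + 1) * a4 k); lia.
move=> x y; lia.
Qed.

Lemma A4_lt_C4 k : 0 < k -> set_lt (A4 k (t4 k)) (C4 k (t4 k + 1)).
Proof.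
move/t4_gt0; have := a4E k; have := eps4_le1 k.
rewrite /set_lt /A4 /C4 /iv /iv2 => e1 aE t_gt0.
split; first by exists (t4 k * a4 k); lia.
split; first by exists ((t4 k + 1) * a4 k + 2 * (2 * t4 k + eps4 k)); lia.
move=> x y; lia.
Qed.

Lemma B4_empty k : odd k -> forall x, ~ B4 k (t4 k + 1) x.
Proof. by move=> od x; rewrite /B4 /iv /eps4 od; lia. Qed.

Lemma B4_lt_C4 k i : t4 k + 1 + eps4 k <= i <= 2 * t4 k + eps4 k ->
  set_lt (B4 k i) (C4 k i).
Proof.
move=> hi; have := a4E k; have := eps4_le1 k; rewrite /set_lt /B4 /C4 /iv /iv2 => e1 aE.
split; first by exists (i * a4 k); lia.
split; first by exists (i * a4 k + 2 * (2 * t4 k + eps4 k)); lia.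
move=> x y; lia.
Qed.

Lemma C4_lt_B4 k i : t4 k + 1 <= i <= 2 * t4 k + eps4 k - 1 ->
  set_lt (C4 k i) (B4 k i.+1).
Proof.
move=> hi; have := a4E k; have := eps4_le1 k; rewrite /set_lt /B4 /C4 /iv /iv2 => e1 aE.
split; first by exists (i * a4 k + 2 * (2 * t4 k + eps4 k)); lia.
split; first by exists (i.+1 * a4 k); lia.
move=> x y; lia.
Qed.

Lemma C4_lt_conductor k :
  set_lt (C4 k (2 * t4 k + eps4 k)) (from ((2 * t4 k + eps4 k + 1) * a4 k)).
Proof.
have := a4E k; have := eps4_le1 k; rewrite /set_lt /C4 /iv2 /from => e1 aE.
split; first by exists ((2 * t4 k + eps4 k) * a4 k + 2 * (2 * t4 k + eps4 k)); lia.
split; first by exists ((2 * t4 k + eps4 k + 1) * a4 k).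
move=> x y; lia.
Qed.

Lemma H4_memG k x : H4 k x <-> memG (a4 k) x.
Proof.
rewrite /H4 /A4 /B4 /C4 /iv /iv2 /from.
have := a4E k; have := eps4_le1 k; move: (a4 k) (t4 k) (eps4 k) => a t e e_le1 aE.
have a_odd : odd a by lia.
split=> [[->|[[i [hi hA]]|[[i [hi hBC]]|hF]]] |].
- exact: memG0.
- by rewrite (_ : x = i * a + (x - i * a)) ?memG_row // /row_mem; lia.
- by rewrite (_ : x = i * a + (x - i * a)) ?memG_row // /row_mem; lia.
- by move: hF; rewrite aE; apply: memG_conductor.
elim/(row_ind a_odd): x => i y hy; rewrite memG_row // /row_mem => hx.
case: (leqP i t) => [hit | hti].
  by case: i hit hx => [|i] hit hx; [left | right; left; exists i.+1]; lia.
case: (leqP i (2 * t + e)) => hi.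
  by right; right; left; exists i; lia.
have : (2 * t + e + 1) * a <= i * a by apply: leq_mul; lia.
by right; right; right; lia.
Qed.

Lemma gen_S4 k x : gen (S4 k) x <-> H4 k x.
Proof. by rewrite H4_memG -gen_memG // a4E odd_4t2e1. Qed.

Lemma H4_submonoid k : is_submonoid (H4 k).
Proof. by split=> [|x y]; [left | rewrite -!gen_S4; exact: gen_add]. Qed.

Lemma H4_perm3 k : 0 < k -> perm_ns 3 (H4 k).
Proof.
move=> k_gt0; apply: (perm_ns_ext (fun x => iff_sym (H4_memG k x))).
have := a4_mod3 k; rewrite a4E => a3.
exact: memG_perm3 (eps4_le1 k) (t4_gt0 k_gt0) a3.
Qed.

Theorem lemma4p4 (k : nat) (hk : 0 < k) :
  (* (1) *)
  (is_submonoid (H4 k) /\ (forall s, S4 k s -> H4 k s)) /\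
  (* (2) *)
  ((forall i, 1 <= i <= t4 k - 1 -> set_lt (A4 k i) (A4 k i.+1)) /\
   (~~ odd k -> set_lt (A4 k (t4 k)) (B4 k (t4 k + 1)) /\
                set_lt (B4 k (t4 k + 1)) (C4 k (t4 k + 1))) /\
   (odd k -> (forall x, ~ B4 k (t4 k + 1) x) /\
             set_lt (A4 k (t4 k)) (C4 k (t4 k + 1))) /\
   (forall i, t4 k + 2 <= i <= 2 * t4 k + eps4 k -> set_lt (B4 k i) (C4 k i)) /\
   (forall i, t4 k + 1 <= i <= 2 * t4 k + eps4 k - 1 ->
      set_lt (C4 k i) (B4 k i.+1)) /\
   set_lt (C4 k (2 * t4 k + eps4 k)) (from ((2 * t4 k + eps4 k + 1) * a4 k))) /\
  (* (3) *)
  (forall x, gen (S4 k) x <-> H4 k x) /\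
  (* (4) *)
  perm_ns 3 (H4 k).
Proof.
have e_le1 := eps4_le1 k.
split; first split; first exact: H4_submonoid.
  by move=> s hs; apply/gen_S4; exact: gen_base.
split; last by split; [exact: gen_S4 | exact: H4_perm3].
split; first exact: A4_lt_A4.
split.
  move=> ev; split; first exact: A4_lt_B4.
  by apply: B4_lt_C4; have := t4_gt0 hk; rewrite /eps4 (negbTE ev); lia.
split; first by move=> od; split; [exact: B4_empty | exact: A4_lt_C4].
split; first by move=> i hi; apply: B4_lt_C4; lia.
by split; [exact: C4_lt_B4 | exact: C4_lt_conductor].
Qed.
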